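(* Let $\lvert\psi\rangle$ be an $n$-qubit state. Suppose the fidelity $\lvert\langle\psi|\phi\rangle\rvert^2$ is maximized by $\lvert\phi\rangle = \lvert0^n\rangle$ over stabilizer states $\lvert\phi\rangle$. Let $S^* = 0^n \times \mathbb F_2^n = \mathrm{Weyl}(\lvert0^n\rangle)$, and let $T = 0^{n + 1} \times \mathbb F_2^{n - 1}$ be a maximal subspace of $S^*$. Then \[\sum_{x \in S^* \setminus T} c_\psi(x) \geq 2^{\frac{n}{2}-1} \left(\sqrt{3}-1\right) F_\mathcal{S}(\lvert\psi\rangle).\]
   Context: For $x=(a,b)\in\mathbb F_2^{2n}$ the Weyl operator is $W_x = i^{a\cdot b}X^{a_1}Z^{b_1}\otimes\cdots\otimes X^{a_n}Z^{b_n}$; $c_\psi(x)=2^{-n/2}\langle\psi|W_x|\psi\rangle$ (the coefficients in the Weyl expansion $\lvert\psi\rangle\langle\psi\rvert=2^{-n/2}\sum_x c_\psi(x)W_x$); $\mathrm{Weyl}(\lvert\phi\rangle)=\{x: W_x\lvert\phi\rangle=\pm\lvert\phi\rangle\}$; $F_\mathcal{S}(\lvert\psi\rangle)=\max_{\lvert\phi\rangle\text{ stabilizer}}\lvert\langle\phi|\psi\rangle\rvert^2$. *)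

From HB Require Import structures.
From mathcomp Require Import all_boot all_order all_algebra.
From mathcomp Require Import reals.
From mathcomp Require Import complex.
Set Implicit Arguments. Unset Strict Implicit. Unset Printing Implicit Defensive.
Import Order.TTheory GRing.Theory Num.Theory.
Local Open Scope ring_scope.

Section Weyl.
Variables (R : realType) (n : nat).
Local Notation C := (R[i]).

Definition bits := {ffun 'I_n -> bool}.
(* an n-qubit vector, given by its amplitudes in the computational basis *)
Definition qvec := bits -> C.

Definition bxor (u v : bits) : bits := [ffun j => u j (+) v j].
Definition bzero : bits := [ffun _ => false].

(* single-qubit Pauli matrix entries <v|X^a|u>, <v|Z^b|u>, and <v|X^a Z^b|u> *)
Definition Xent (a v u : bool) : C := if v == (u (+) a) then 1 else 0.
Definition Zent (b v u : bool) : C := if v == u then (-1) ^+ (b && u) else 0.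
Definition XZent (a b v u : bool) : C := \sum_(w : bool) Xent a v w * Zent b w u.

(* a . b computed over the integers *)
Definition bdot (a b : bits) : nat := #|[set j | a j && b j]|.

(* Weyl operator W_x = i^{a.b} X^{a_1}Z^{b_1} (x) ... (x) X^{a_n}Z^{b_n}, x = (a,b):
   matrix entry <v|W_x|u> (tensor-product entries are products of the factors' entries) *)
Definition Went (x : bits * bits) (v u : bits) : C :=
  (Complex 0 1) ^+ (bdot x.1 x.2) * \prod_(j : 'I_n) XZent (x.1 j) (x.2 j) (v j) (u j).

Definition Wapp (x : bits * bits) (phi : qvec) : qvec :=
  fun v => \sum_(u : bits) Went x v u * phi u.

Definition inner (phi psi : qvec) : C := \sum_(u : bits) conjc (phi u) * psi u.

Definition is_state (phi : qvec) : Prop := inner phi phi = 1.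

Definition cpsi (psi : qvec) (x : bits * bits) : C :=
  real_complex R ((Num.sqrt (2 : R)) ^+ n)^-1 * inner psi (Wapp x psi).

Definition Weyl (phi : qvec) : {set bits * bits} :=
  [set x | [forall v, Wapp x phi v == phi v] || [forall v, Wapp x phi v == - phi v]].

(* stabilizer states: states stabilized (up to sign) by 2^n Weyl operators,
   i.e. |Weyl(phi)| = 2^n (maximal stabilizer group) *)
Definition stabilizer (phi : qvec) : Prop := is_state phi /\ #|Weyl phi| = (2 ^ n)%N.

Definition fid (phi psi : qvec) : R :=
  let: Complex a b := inner phi psi in a ^+ 2 + b ^+ 2.

(* stabilizer fidelity F_S(psi) = max (= sup) over stabilizer states *)
Definition FS (psi : qvec) : R :=
  sup (fun r : R => exists phi, stabilizer phi /\ r = fid phi psi).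

Definition ket0 : qvec := fun u => if u == bzero then 1 else 0.

(* S* = 0^n x F_2^n and T = 0^{n+1} x F_2^{n-1} *)
Definition Sstar : {set bits * bits} := [set x : bits * bits | x.1 == bzero].
Definition Tsub : {set bits * bits} :=
  [set x : bits * bits | (x.1 == bzero) && [forall j : 'I_n, (val j == 0%N) ==> ~~ x.2 j]].

End Weyl.

(* Write p0 = |psi(0^n)|^2 and p1 = |psi(e_0)|^2, where e_0 flips the first qubit.  The set
   S* \ T consists of the points (0, b) with b_0 = 1, and averaging the characters
   b |-> (-1)^(b.u) over that coset gives
     sum_{x in S* \ T} c_psi(x) = 2^(n/2 - 1) (p0 - p1).
   The four states (|0^n> + w |e_0>) / sqrt 2 with w in {1, -1, i, -i} are stabilizer states,
   so optimality of |0^n> yields p1 +- 2 X <= p0 and p1 +- 2 Y <= p0, where X + iY is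
   conj(psi(0^n)) psi(e_0) and X^2 + Y^2 = p0 p1.  Hence (p0 - p1)^2 >= 2 p0 p1, which together
   with p1 <= p0 forces p1 <= (2 - sqrt 3) p0; finally F_S(psi) <= p0. *)

From mathcomp Require Import all_boot all_order all_algebra.
From mathcomp Require Import reals.
From mathcomp Require Import complex.
From mathcomp Require Import ring lra.
Set Implicit Arguments. Unset Strict Implicit. Unset Printing Implicit Defensive.
Import Order.TTheory GRing.Theory Num.Theory.
Local Open Scope ring_scope.
Local Open Scope complex_scope.

Lemma prodr_if0 (R : comPzSemiRingType) (I : finType) (P : pred I) (F : I -> R) :
  \prod_i (if P i then F i else 0) = if [forall i, P i] then \prod_i F i else 0.
Proof.
case: forallP => [allP | /forallP]; first by apply: eq_bigr => i _; rewrite allP.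
by rewrite negb_forall => /existsP [i /negbTE Pi]; rewrite (bigD1 i) //= Pi mul0r.
Qed.

Definition sqnormc (R : pzRingType) (z : R[i]) : R := complex.Re z ^+ 2 + complex.Im z ^+ 2.

Lemma mulJc (R : rcfType) (z : R[i]) : conjc z * z = (sqnormc z)%:C.
Proof.
by case: z => a b; apply/eqP; rewrite eq_complex /sqnormc /=; apply/andP; split; apply/eqP; ring.
Qed.

Lemma i_neq0 (R : rcfType) : ('i : R[i]) != 0.
Proof. by rewrite eq_complex /= oner_eq0 andbF. Qed.

Lemma sqnormcZ (R : rcfType) (r : R) (z : R[i]) : sqnormc (r%:C * z) = r ^+ 2 * sqnormc z.
Proof. by case: z => a b; rewrite /sqnormc /=; ring. Qed.

Lemma quadratic_gap (R : rcfType) (p0 p1 X Y : R) :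
  0 <= p1 -> X ^+ 2 + Y ^+ 2 = p0 * p1 ->
  p1 + 2 * X <= p0 -> p1 - 2 * X <= p0 -> p1 + 2 * Y <= p0 -> p1 - 2 * Y <= p0 ->
  (Num.sqrt 3 - 1) * p0 <= p0 - p1.
Proof.
(* (p0 - p1)^2 >= 2 p0 p1 puts p1 outside ((2 - sqrt 3) p0, (2 + sqrt 3) p0), and p1 <= p0. *)
move=> p1_ge0 XY X1 X2 Y1 Y2.
have s3 : Num.sqrt (3 : R) ^+ 2 = 3 by rewrite sqr_sqrtr ?ler0n.
have s0 : 0 <= Num.sqrt (3 : R) := sqrtr_ge0 3.
have X4 : 4 * X ^+ 2 <= (p0 - p1) ^+ 2 by nra.
have Y4 : 4 * Y ^+ 2 <= (p0 - p1) ^+ 2 by nra.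
nra.
Qed.

Lemma sqnormc_gap (R : rcfType) (z0 z1 : R[i]) :
  (forall (w : R[i]) (k : bool), w ^+ 2 = (-1) ^+ k -> sqnormc (z0 + w * z1) <= 2 * sqnormc z0) ->
  (Num.sqrt 3 - 1) * sqnormc z0 <= sqnormc z0 - sqnormc z1.
Proof.
move=> H.
have e1 : (1 : R[i]) ^+ 2 = (-1) ^+ false by rewrite expr1n.
have e2 : (-1 : R[i]) ^+ 2 = (-1) ^+ false by rewrite sqrrN expr1n.
have e3 : ('i : R[i]) ^+ 2 = (-1) ^+ true by rewrite sqr_i.
have e4 : (- 'i : R[i]) ^+ 2 = (-1) ^+ true by rewrite sqrrN sqr_i.
move: (H _ _ e1) (H _ _ e2) (H _ _ e3) (H _ _ e4); clear H.
case: z0 z1 => a0 b0 [a1 b1]; rewrite /sqnormc /= => h1 h2 h3 h4.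
apply: (@quadratic_gap _ _ _ (a0 * a1 + b0 * b1) (a0 * b1 - b0 * a1)).
- by rewrite addr_ge0 ?sqr_ge0.
- by ring.
all: nra.
Qed.

Section PauliCalculus.
Variables (R : realType) (n : nat).
Local Notation C := R[i].
Local Notation bits := (bits n).
Local Notation bzero := (bzero n).

Lemma bxorK (a u : bits) : bxor (bxor u a) a = u.
Proof. by apply/ffunP => j; rewrite !ffunE addbK. Qed.

Lemma bxor_eq (u v a : bits) : (v == bxor u a) = (u == bxor v a).
Proof. by apply/eqP/eqP => ->; rewrite bxorK. Qed.

Lemma bxor0r (u : bits) : bxor u bzero = u.
Proof. by apply/ffunP => j; rewrite !ffunE addbF. Qed.

Lemma bdot0l (b : bits) : bdot bzero b = 0%N.
Proof. by apply/eqP; rewrite cards_eq0; apply/eqP/setP => j; rewrite !inE ffunE. Qed.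

Lemma bxor0l (u : bits) : bxor bzero u = u.
Proof. by apply/ffunP => j; rewrite !ffunE. Qed.

Lemma bxorxx (a : bits) : bxor a a = bzero.
Proof. by apply/ffunP => j; rewrite !ffunE addbb. Qed.

Lemma bdot0r (b : bits) : bdot b bzero = 0%N.
Proof. by apply/eqP; rewrite cards_eq0; apply/eqP/setP => j; rewrite !inE ffunE andbF. Qed.

Lemma signr_bdot (a b : bits) :
  (-1 : C) ^+ bdot a b = \prod_j (-1) ^+ (a j && b j).
Proof.
rewrite /bdot -prodr_const big_mkcond /=; apply: eq_bigr => j _.
by rewrite inE; case: (a j && b j).
Qed.

Lemma signr_bdot_bxor (b u v : bits) :
  (-1 : C) ^+ bdot b (bxor u v) = (-1) ^+ bdot b u * (-1) ^+ bdot b v.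
Proof.
rewrite !signr_bdot -big_split /=; apply: eq_bigr => j _.
by rewrite ffunE -signr_addb andb_addr.
Qed.

Lemma sum_signr_bdot (w : bits) :
  \sum_(b : bits) (-1 : C) ^+ bdot b w = if w == bzero then 2 ^+ n else 0.
Proof.
under eq_bigr do rewrite signr_bdot.
rewrite -(bigA_distr_bigA (fun j c => (-1 : C) ^+ (c && w j))) /=.
under eq_bigr do rewrite big_bool /= expr0.
have -> : (w == bzero) = [forall j, ~~ w j].
  by apply/eqP/forallP => [-> j | w0]; last apply/ffunP => j; rewrite ffunE ?(negbTE (w0 j)).
have -> : (2 : C) ^+ n = \prod_(j < n) 2 by rewrite prodr_const card_ord.
rewrite -prodr_if0; apply: eq_bigr => j _.
by case: (w j); rewrite /= ?expr1 ?expr0 ?addNr.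
Qed.

Lemma XZentE (a b v u : bool) :
  XZent R a b v u = if v == u (+) a then (-1) ^+ (b && u) else 0.
Proof.
by rewrite /XZent big_bool /Xent /Zent; case: a; case: b; case: v; case: u;
  rewrite /= ?mul1r ?mul0r ?addr0 ?add0r.
Qed.

Lemma WentE (x : bits * bits) (v u : bits) : Went R x v u =
  'i ^+ bdot x.1 x.2 * (if u == bxor v x.1 then (-1) ^+ bdot x.2 u else 0).
Proof.
rewrite /Went signr_bdot; congr (_ * _).
rewrite (eq_bigr _ (fun j _ => XZentE _ _ _ _)) prodr_if0 -bxor_eq; congr (if _ then _ else _).
by apply/forallP/eqP => [vE | -> j]; [apply/ffunP => j; rewrite ffunE; apply/eqP | rewrite ffunE].
Qed.

Lemma WappE (x : bits * bits) (phi : qvec R n) (v : bits) : Wapp x phi v =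
  'i ^+ bdot x.1 x.2 * (-1) ^+ bdot x.2 (bxor v x.1) * phi (bxor v x.1).
Proof.
rewrite /Wapp (bigD1 (bxor v x.1)) //= big1 ?addr0 => [|u /negbTE uNv].
  by rewrite WentE eqxx.
by rewrite WentE uNv mulr0 mul0r.
Qed.

Lemma fidE (phi psi : qvec R n) : fid phi psi = sqnormc (inner phi psi).
Proof. by rewrite /fid /sqnormc; case: (inner phi psi). Qed.

Lemma inner_ket0 (psi : qvec R n) : inner (@ket0 R n) psi = psi bzero.
Proof.
rewrite /inner (bigD1 bzero) //= big1 => [|u /negbTE u0]; last by rewrite /ket0 u0 conjc0 mul0r.
by rewrite /ket0 eqxx conjc1 mul1r addr0.
Qed.

Lemma FS_le (psi : qvec R n) (r : R) : (exists phi : qvec R n, stabilizer phi) ->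
  (forall phi, stabilizer phi -> fid phi psi <= r) -> FS psi <= r.
Proof.
move=> [phi st] ub; apply: ge_sup => [|_ [phi' [st' ->]]]; last exact: ub.
by exists (fid phi psi), phi.
Qed.

Lemma cpsi_diag (psi : qvec R n) (b : bits) :
  cpsi psi (bzero, b) = ((Num.sqrt 2 ^+ n)^-1)%:C * \sum_u (-1) ^+ bdot b u * (sqnormc (psi u))%:C.
Proof.
rewrite /cpsi /inner; congr (_ * _); apply: eq_bigr => u _.
by rewrite WappE /= bdot0l bxor0r expr0 mul1r mulrCA mulJc.
Qed.

End PauliCalculus.

Section FirstQubit.
Variables (R : realType) (m : nat).
Local Notation n := m.+1.
Local Notation C := R[i].
Local Notation bits := (bits n).
Local Notation bzero := (bzero n).

Definition e0 : bits := [ffun j => j == ord0].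

Lemma e0_neq0 : e0 != bzero.
Proof. by apply/eqP => /ffunP /(_ ord0); rewrite !ffunE. Qed.

Lemma signr_bdot_e0 (b : bits) : (-1 : C) ^+ bdot b e0 = (-1) ^+ b ord0.
Proof.
rewrite signr_bdot (bigD1 ord0) //= big1 => [|j /negbTE j0]; last by rewrite ffunE j0 andbF.
by rewrite ffunE eqxx andbT mulr1.
Qed.

Lemma sum_signr_bdot_first_bit (u : bits) :
  \sum_(b : bits | b ord0) (-1 : C) ^+ bdot b u = 2 ^+ m * ((u == bzero)%:R - (u == e0)%:R).
Proof.
have twoK : (2 : C) != 0 by rewrite pnatr_eq0.
apply: (mulIf twoK); rewrite [RHS]mulrC mulrA -exprS.
(* the indicator of b_0 = 1 is (1 - (-1)^(b.e_0)) / 2 *)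
have term (b : bits) : (if b ord0 then (-1 : C) ^+ bdot b u else 0) * 2
    = (-1) ^+ bdot b u - (-1) ^+ bdot b (bxor u e0).
  rewrite signr_bdot_bxor signr_bdot_e0; case: (b ord0);
    rewrite ?expr1 ?expr0 ?mulr1 ?mulrN1 ?opprK ?subrr ?mul0r //.
  by rewrite mulr_natr mulr2n.
rewrite big_mkcond mulr_suml (eq_bigr _ (fun b _ => term b)) sumrB !sum_signr_bdot.
by rewrite [bxor u e0 == _]eq_sym bxor_eq bxor0l mulrBr !mulr_natr !mulrb.
Qed.

Lemma in_SstarD_Tsub (x : bits * bits) :
  (x \in Sstar n :\: Tsub n) = (x.1 == bzero) && x.2 ord0.
Proof.
rewrite !inE; case: (x.1 == bzero) => //=; rewrite andbT negb_forall.
apply/existsP/idP => [[j] | x20]; last by exists ord0; rewrite /= x20.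
by rewrite negb_imply negbK => /andP [/eqP j0]; rewrite (_ : j = ord0) //; apply: val_inj.
Qed.

Lemma invsqrt2X_mul2X : (Num.sqrt (2 : R) ^+ n)^-1 * 2 ^+ m = Num.sqrt 2 ^+ n / 2.
Proof.
have t0 : Num.sqrt (2 : R) ^+ n != 0 by rewrite expf_neq0 // sqrtr_eq0 -ltNge ltr0n.
have two0 : (2 : R) != 0 by rewrite pnatr_eq0.
apply: (mulfI t0); rewrite mulrA divff // mul1r mulrA -expr2 -exprM mulnC exprM sqr_sqrtr ?ler0n //.
by rewrite exprS mulrAC divff ?mul1r.
Qed.

Lemma sum_cpsi_SstarD_Tsub (psi : qvec R n) :
  \sum_(x in Sstar n :\: Tsub n) cpsi psi x
  = (Num.sqrt 2 ^+ n / 2 * (sqnormc (psi bzero) - sqnormc (psi e0)))%:C.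
Proof.
rewrite (reindex_onto (fun b => (bzero, b)) snd) => [|x]; last first.
  by rewrite in_SstarD_Tsub => /andP [/eqP <- _]; case: x.
rewrite (eq_bigl (fun b : bits => b ord0)) => [|b]; last by rewrite in_SstarD_Tsub /= !eqxx andbT.
under eq_bigr do rewrite cpsi_diag.
rewrite -mulr_sumr exchange_big /=.
under eq_bigr do rewrite -mulr_suml sum_signr_bdot_first_bit -mulrA mulrBl !mulr_natl !mulrb.
rewrite -mulr_sumr sumrB -!big_mkcond /= !big_pred1_eq mulrA.
by rewrite -invsqrt2X_mul2X !rmorphM rmorphB rmorphXn rmorph_nat.
Qed.

Lemma card_first_bit_eq (c : bool) : #|[set b : bits | b ord0 == c]| = (2 ^ m)%N.
Proof.
rewrite -sum1_card big_mkcond /=.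
pose F (j : 'I_n) (d : bool) := if j == ord0 then nat_of_bool (d == c) else 1%N.
rewrite (eq_bigr (fun b : bits => \prod_j F j (b j))%N) => [|b _]; last first.
  rewrite (bigD1 ord0) //= big1 => [|j /negbTE j0]; rewrite /F ?eqxx ?j0 //.
  by rewrite muln1 inE; case: eqP.
rewrite -(bigA_distr_bigA F) big_ord_recl /= /F eqxx big_bool /=.
under eq_bigr do rewrite sum_nat_const card_bool.
by rewrite prod_nat_const card_ord muln1; case: (c); rewrite mul1n.
Qed.

Definition pair_weyl (k : bool) : {set bits * bits} :=
  setX [set bzero] [set b : bits | b ord0 == false] :|:
  setX [set e0] [set b : bits | b ord0 == k].

Lemma card_pair_weyl (k : bool) : #|pair_weyl k| = (2 ^ n)%N.
Proof.
rewrite cardsU !cardsX !cards1 !card_first_bit_eq !mul1n.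
have -> : setX [set bzero] [set b : bits | b ord0 == false] :&:
          setX [set e0] [set b : bits | b ord0 == k] = set0.
  apply/setP => -[a b]; rewrite !inE /=; apply/negbTE.
  by case: (eqVneq a bzero) => [->|//]; rewrite [bzero == e0]eq_sym (negbTE e0_neq0) andbF.
by rewrite cards0 subn0 addnn -mul2n expnS.
Qed.

Lemma bdot_e0 (b : bits) : bdot e0 b = b ord0.
Proof.
rewrite /bdot (_ : [set j | e0 j && b j] = if b ord0 then [set ord0] else set0).
  by case: (b ord0); rewrite ?cards1 ?cards0.
case b0 : (b ord0); apply/setP => j; rewrite !inE ffunE;
  by have [->|j0] := eqVneq j ord0; rewrite ?b0 ?(negbTE j0).
Qed.

Lemma bxor_e0_eq0 (v : bits) : (bxor v e0 == bzero) = (v == e0).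
Proof. by rewrite eq_sym bxor_eq bxor0l. Qed.

Lemma bxor_e0_eqe0 (v : bits) : (bxor v e0 == e0) = (v == bzero).
Proof. by rewrite eq_sym bxor_eq bxorxx. Qed.

Definition invsqrt2 : C := ((Num.sqrt 2)^-1)%:C.

Definition pair_state (w : C) : qvec R n :=
  fun u => invsqrt2 * (if u == bzero then 1 else if u == e0 then w else 0).

Lemma invsqrt2_neq0 : invsqrt2 != 0.
Proof. by rewrite /invsqrt2 fmorph_eq0 invr_eq0 sqrtr_eq0 -ltNge ltr0n. Qed.

Lemma pair_state0 (w : C) : pair_state w bzero = invsqrt2.
Proof. by rewrite /pair_state eqxx mulr1. Qed.

Lemma pair_state_e0 (w : C) : pair_state w e0 = invsqrt2 * w.
Proof. by rewrite /pair_state eqxx (negbTE e0_neq0). Qed.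

Lemma conjc_invsqrt2 : conjc invsqrt2 = invsqrt2.
Proof. exact: conjc_real. Qed.

Lemma conjc_invsqrt2M (z : C) : conjc (invsqrt2 * z) = invsqrt2 * conjc z.
Proof. by rewrite rmorphM; congr (_ * _); exact: conjc_real. Qed.

Lemma sqr_invsqrt2 : invsqrt2 ^+ 2 = 2^-1.
Proof. by rewrite -rmorphXn exprVn sqr_sqrtr ?ler0n // fmorphV rmorph_nat. Qed.

Lemma inner_pair_state (w : C) (psi : qvec R n) :
  inner (pair_state w) psi = invsqrt2 * (psi bzero + conjc w * psi e0).
Proof.
rewrite /inner (bigD1 bzero) //= (bigD1 e0) ?e0_neq0 //= big1 => [|u /andP [u0 ue]].
  by rewrite pair_state0 pair_state_e0 conjc_invsqrt2 conjc_invsqrt2M addr0; ring.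
by rewrite /pair_state (negbTE u0) (negbTE ue) mulr0 rmorph0 mul0r.
Qed.

Lemma fid_pair_state (w : C) (psi : qvec R n) :
  fid (pair_state w) psi = sqnormc (psi bzero + conjc w * psi e0) / 2.
Proof.
by rewrite fidE inner_pair_state sqnormcZ exprVn sqr_sqrtr ?ler0n // mulrC.
Qed.

Section PairState.
Variables (w : C) (k : bool).
Hypothesis w2 : w ^+ 2 = (-1) ^+ k.

Lemma Wapp_pair_state (x : bits * bits) : x \in pair_weyl k ->
  exists2 sg : C, sg ^+ 2 = 1 & forall v, Wapp x (pair_state w) v = sg * pair_state w v.
Proof.
rewrite !inE => /orP [] /andP [/eqP a0 /eqP b0].
  exists 1; rewrite ?expr1n // => v; rewrite WappE a0 bdot0l bxor0r expr0 !mul1r /pair_state.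
  have [->|v0] := eqVneq v bzero; first by rewrite bdot0r expr0 mul1r.
  have [->|ve] := eqVneq v e0; first by rewrite signr_bdot_e0 b0 expr0 mul1r.
  by rewrite !mulr0.
exists ('i ^+ k * (-1) ^+ k * w).
  by rewrite !exprMn sqrr_sign w2 -exprM mulnC exprM sqr_i mulr1 -expr2 sqrr_sign.
move=> v; rewrite WappE a0 bdot_e0 b0 /pair_state bxor_e0_eq0 bxor_e0_eqe0.
have [->|v0] := eqVneq v bzero.
  by rewrite bxor0l signr_bdot_e0 b0 [bzero == e0]eq_sym (negbTE e0_neq0); ring.
have [->|ve] := eqVneq v e0; last by rewrite !mulr0.
rewrite bxorxx bdot0r expr0.
rewrite [RHS](_ : _ = 'i ^+ k * ((-1) ^+ k * w ^+ 2) * invsqrt2); last by ring.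
by rewrite w2 -expr2 sqrr_sign; ring.
Qed.

Lemma pair_weyl_of_Wapp (x : bits * bits) (sg : C) :
  (forall v, Wapp x (pair_state w) v = sg * pair_state w v) -> x \in pair_weyl k.
Proof.
case: x => a b H; rewrite !inE /=.
have w0 : w != 0.
  by apply/eqP => w0; move/eqP: w2; rewrite w0 expr0n /= eq_sym signr_eq0.
have ia0 : 'i ^+ bdot a b * invsqrt2 != 0 by rewrite mulf_neq0 ?expf_neq0 ?i_neq0 ?invsqrt2_neq0.
(* W_x sends |a> to a multiple of |0^n>, so a lies in the support {0^n, e_0}. *)
have : pair_state w a != 0.
  apply: contraNneq ia0 => pa0.
  by have := H a; rewrite WappE /= bxorxx bdot0r expr0 mulr1 pair_state0 pa0 mulr0 => /eqP.
rewrite /pair_state mulf_eq0 negb_or invsqrt2_neq0 /=.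
have [a0 _ | a0] := eqVneq a bzero; first subst a.
  have := H bzero; rewrite WappE /= bdot0l bxor0r bdot0r expr0 !mul1r pair_state0.
  rewrite -{1}[invsqrt2]mul1r => /(mulIf invsqrt2_neq0) sg1; subst sg.
  have := H e0; rewrite WappE /= bdot0l bxor0r signr_bdot_e0 expr0 !mul1r pair_state_e0.
  rewrite -{2}[invsqrt2 * w]mul1r => /(mulIf (mulf_neq0 invsqrt2_neq0 w0)).
  by rewrite -[1](expr0 (-1 : C)) => /(@signr_inj _ (b ord0) false) ->.
have [ae _ | _] := eqVneq a e0; last by rewrite eqxx.
rewrite {}ae /= in H ia0 *; rewrite bdot_e0 in ia0.
have := H e0; rewrite WappE /= bdot_e0 bxorxx bdot0r expr0 mulr1 pair_state0 pair_state_e0 => He.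
have := H bzero; rewrite WappE /= bdot_e0 bxor0l signr_bdot_e0 pair_state0 pair_state_e0 => H0.
suff : 'i ^+ b ord0 * invsqrt2 * (-1) ^+ (b ord0 (+) k) = 'i ^+ b ord0 * invsqrt2 * (-1) ^+ false.
  by move/(mulfI ia0)/(@signr_inj _ _ false); rewrite -negb_add => ->.
transitivity ('i ^+ b ord0 * (-1) ^+ b ord0 * (invsqrt2 * w) * w).
  by rewrite signr_addb -w2; ring.
by rewrite H0 expr0 mulr1 -mulrA -He.
Qed.

Lemma Weyl_pair_state : Weyl (pair_state w) = pair_weyl k.
Proof.
apply/setP => x; rewrite inE; apply/idP/idP.
  case/orP => /forallP H; [apply: (@pair_weyl_of_Wapp x 1) | apply: (@pair_weyl_of_Wapp x (-1))];
    by move=> v; rewrite ?mul1r ?mulN1r; apply/eqP.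
case/Wapp_pair_state => sg /eqP; rewrite sqrf_eq1 => /orP [] /eqP -> H; apply/orP; [left | right];
  by apply/forallP => v; rewrite H ?mul1r ?mulN1r.
Qed.

Lemma mulJc_eq1 : conjc w * w = 1.
Proof. by rewrite mulrC -sqr_normc -normrX w2 normrX normrN1 expr1n. Qed.

Lemma stabilizer_pair_state : stabilizer (pair_state w).
Proof.
split; last by rewrite Weyl_pair_state card_pair_weyl.
rewrite /is_state inner_pair_state pair_state0 pair_state_e0 mulrCA mulJc_eq1.
by rewrite mulr1 -mulr2n mulrnAr -expr2 sqr_invsqrt2 -mulr_natr mulVf // pnatr_eq0.
Qed.

End PairState.

End FirstQubit.

Unset Implicit Arguments.
Theorem lemma5p4 (R : realType) (n : nat) (psi : qvec R n) :
  (0 < n)%N ->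
  is_state psi ->
  (forall phi : qvec R n, stabilizer phi -> fid phi psi <= fid (@ket0 R n) psi) ->
  (real_complex R (Num.sqrt (2 : R) ^+ n / 2 * (Num.sqrt (3 : R) - 1) * FS psi)
     <= \sum_(x in Sstar n :\: Tsub n) cpsi psi x)%R.
Proof.
case: n psi => [//|m] psi _ _ psi_max; rewrite fidE inner_ket0 in psi_max.
have fid_le (w : R[i]) (k : bool) : w ^+ 2 = (-1) ^+ k ->
    sqnormc (psi (bzero _) + w * psi (e0 m)) <= 2 * sqnormc (psi (bzero _)).
  move=> w2; have Jw2 : (conjc w) ^+ 2 = (-1) ^+ k by rewrite -rmorphXn w2 rmorph_sign.
  have := psi_max _ (stabilizer_pair_state m Jw2).
  by rewrite fid_pair_state conjcK ler_pdivrMr ?ltr0n // [_ * 2]mulrC.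
have FS_psi0 : FS psi <= sqnormc (psi (bzero _)).
  apply: FS_le psi_max; exists (@pair_state _ m 1).
  by apply: (@stabilizer_pair_state _ _ _ false); rewrite expr1n.
rewrite sum_cpsi_SstarD_Tsub lecR -mulrA ler_wpM2l ?divr_ge0 ?exprn_ge0 ?sqrtr_ge0 ?ler0n //.
apply: le_trans (sqnormc_gap fid_le); rewrite ler_wpM2l // subr_ge0 -{1}sqrtr1 ler_sqrt ?ler1n //.
Qed.
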